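(* With $\nu^{(n)}(\epsilon_0)$ and $\nu^{(n)}(\epsilon_1)$ the asymptotic densities of the sets $\{k\in\mathbf{N}:\xi_n(k)\text{ even}\}$ and $\{k\in\mathbf{N}:\xi_n(k)\text{ odd}\}$ respectively, one has $\lim_{n\to\infty}\nu^{(n)}(\epsilon_0)=2/3$ and $\lim_{n\to\infty}\nu^{(n)}(\epsilon_1)=1/3$.
   Context: $\mathbf{N}=\{1,2,3,\dots\}$. The asymptotic density of $K\subseteq\mathbf{N}$ is $\lim_{m\to\infty}\#(K\cap[1,m])/m$ when it exists. The Collatz map $\xi:\mathbf{N}\to\mathbf{N}$ is $\xi(\omega)=\omega/2$ if $\omega$ is even and $\xi(\omega)=3\omega+1$ if $\omega$ is odd; $\xi_n$ denotes its $n$-fold iterate, with $\xi_0$ the identity. *)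

From Stdlib Require Import Reals Arith.
Open Scope R_scope.

Definition collatz (w : nat) : nat :=
  if Nat.even w then Nat.div2 w else 3 * w + 1.

Fixpoint collatz_iter (n : nat) (w : nat) : nat :=
  match n with
  | O => w
  | S n' => collatz (collatz_iter n' w)
  end.

Fixpoint count_upto (P : nat -> bool) (m : nat) : nat :=
  match m with
  | O => O
  | S m' => (if P (S m') then 1 else 0) + count_upto P m'
  end%nat.

Definition has_density (P : nat -> bool) (d : R) : Prop :=
  Un_cv (fun m => INR (count_upto P m) / INR m) d.

(* The parity of ξ_n(k) only depends on k mod 2^(n+1), so both sets are
   periodic and their densities are the proportions e_n / 2^(n+1) and
   1 - e_n / 2^(n+1), where e_n counts the k < 2^(n+1) with ξ_n(k) even.
   Splitting a period according to the parity of k, with ξ(2y) = y and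
   ξ(2y+1) = 2(3y+2), gives e_(n+2) = e_(n+1) + 2 e_n: the map y ↦ 3y+2
   permutes the residues modulo a power of 2, so composing with it does not
   change the count over a period.  Hence 3 e_n = 2^(n+2) - (-1)^n, and the
   densities are 2/3 ∓ (-1/2)^n / 6. *)

From Stdlib Require Import Reals Arith Lia Lra.
Open Scope R_scope.

Fixpoint count_lt (P : nat -> bool) (n : nat) : nat :=
  match n with
  | O => O
  | S n' => count_lt P n' + (if P n' then 1 else 0)
  end%nat.

Definition periodic (P : nat -> bool) (p : nat) : Prop :=
  forall x, P (x + p)%nat = P x.

Lemma count_lt_ext P Q n : (forall i, P i = Q i) -> count_lt P n = count_lt Q n.
Proof. intros HPQ; induction n as [|n IH]; simpl; [reflexivity | now rewrite IH, HPQ]. Qed.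

Lemma count_lt_le P n : (count_lt P n <= n)%nat.
Proof. induction n as [|n IH]; simpl; [lia | destruct (P n); lia]. Qed.

Lemma count_lt_negb P n : count_lt (fun i => negb (P i)) n = (n - count_lt P n)%nat.
Proof.
  induction n as [|n IH]; [reflexivity|]; cbn [count_lt].
  pose proof (count_lt_le P n); destruct (P n); cbn [negb]; lia.
Qed.

Lemma count_lt_add P m n :
  count_lt P (m + n) = (count_lt P m + count_lt (fun j => P (m + j)) n)%nat.
Proof.
  induction n as [|n IH]; simpl.
  - now rewrite Nat.add_0_r.
  - rewrite Nat.add_succ_r; simpl; rewrite IH; lia.
Qed.

Lemma count_lt_double P n :
  count_lt P (2 * n) =
  (count_lt (fun i => P (2 * i)) n + count_lt (fun i => P (2 * i + 1)) n)%nat.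
Proof.
  induction n as [|n IH]; [reflexivity|].
  replace (2 * S n)%nat with (S (S (2 * n))) by lia; cbn [count_lt].
  rewrite IH, Nat.add_1_r; lia.
Qed.

Lemma periodic_mul P p q : periodic P p -> periodic P (q * p).
Proof.
  intros HP x; induction q as [|q IH]; simpl.
  - now rewrite Nat.add_0_r.
  - now rewrite (Nat.add_comm p), Nat.add_assoc, HP.
Qed.

Lemma count_lt_periodic_mul P p q :
  periodic P p -> count_lt P (q * p) = (q * count_lt P p)%nat.
Proof.
  intros HP; induction q as [|q IH]; [reflexivity|].
  simpl; rewrite count_lt_add, (count_lt_ext (fun j => P (p + j)%nat) P), IH; [lia|].
  intros j; rewrite Nat.add_comm; apply HP.
Qed.

Lemma count_lt_shift P p :
  periodic P p -> count_lt (fun j => P (S j)) p = count_lt P p.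
Proof.
  intros HP.
  pose proof (count_lt_add P 1 p) as Hshift; simpl in Hshift.
  specialize (HP O); simpl in HP; rewrite HP in Hshift.
  destruct (P O); lia.
Qed.

(* The even- and odd-indexed terms of the progression fall into opposite
   parity classes, and each is again an odd-step progression for one of the
   half-period predicates y ↦ P (2y + e). *)
Lemma count_lt_odd_progression N : forall P c a,
  periodic P (2 ^ N) -> Nat.Odd c ->
  count_lt (fun j => P (c * j + a)%nat) (2 ^ N) = count_lt P (2 ^ N).
Proof.
  induction N as [|N IH]; intros P c a HP [k Hc].
  - assert (Hconst : forall x, P x = P O).
    { induction x as [|x IHx]; [reflexivity|].
      rewrite <- IHx, <- (HP x); f_equal; simpl; lia. }
    simpl; now rewrite Hconst.
  - set (half e := fun y => P (2 * y + e)%nat).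
    assert (Hhalf : forall e b,
      count_lt (fun i => half e (c * i + b)%nat) (2 ^ N) = count_lt (half e) (2 ^ N)).
    { intros e b; apply IH; [| now exists k].
      intros y; unfold half; rewrite <- (HP (2 * y + e)%nat); f_equal; simpl; lia. }
    change (2 ^ S N)%nat with (2 * 2 ^ N)%nat.
    assert (Hfull : count_lt P (2 * 2 ^ N) =
      (count_lt (half 0%nat) (2 ^ N) + count_lt (half 1%nat) (2 ^ N))%nat).
    { rewrite count_lt_double; f_equal; apply count_lt_ext; intros i;
        unfold half; f_equal; lia. }
    rewrite count_lt_double, Hfull.
    destruct (Nat.Even_or_Odd a) as [[a' Ha] | [a' Ha]]; subst a c.
    + rewrite <- (Hhalf 0%nat a'), <- (Hhalf 1%nat (k + a')%nat).
      f_equal; apply count_lt_ext; intros i; unfold half; f_equal; lia.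
    + rewrite <- (Hhalf 1%nat a'), <- (Hhalf 0%nat (k + a' + 1)%nat), Nat.add_comm.
      f_equal; apply count_lt_ext; intros i; unfold half; f_equal; lia.
Qed.

Lemma count_lt_periodic_approx P p m : (0 < p)%nat -> periodic P p ->
  (count_lt P m * p <= m * count_lt P p + p * p)%nat /\
  (m * count_lt P p <= count_lt P m * p + p * p)%nat.
Proof.
  intros Hp HP.
  pose proof (Nat.div_mod_eq m p) as Hm.
  pose proof (Nat.mod_upper_bound m p ltac:(lia)) as Hs.
  set (q := (m / p)%nat) in *; set (s := (m mod p)%nat) in *.
  assert (Hcount : count_lt P m = (q * count_lt P p + count_lt P s)%nat).
  { rewrite Hm, (Nat.mul_comm p q), count_lt_add, count_lt_periodic_mul by exact HP.
    f_equal; apply count_lt_ext; intros j.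
    rewrite Nat.add_comm; apply periodic_mul, HP. }
  pose proof (count_lt_le P p); pose proof (count_lt_le P s).
  rewrite Hcount, Hm; split; nia.
Qed.

Lemma Un_cv_of_le_div u l C :
  (forall m, (0 < m)%nat -> Rabs (u m - l) <= C / INR m) -> Un_cv u l.
Proof.
  intros Hu eps Heps.
  destruct (INR_unbounded (C / eps)) as [N HN].
  exists (S N); intros m Hm; unfold R_dist.
  assert (HNm : INR N < INR m) by (apply lt_INR; lia).
  assert (0 <= INR N) by apply pos_INR.
  apply (Rle_lt_trans _ _ _ (Hu m ltac:(lia))).
  apply Rmult_lt_reg_r with (INR m); [lra|].
  unfold Rdiv; rewrite Rmult_assoc, Rinv_l by lra.
  replace C with (C / eps * eps) by (field; lra).
  nra.
Qed.

Lemma count_upto_count_lt P m : count_upto P m = count_lt (fun j => P (S j)) m.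
Proof. induction m as [|m IH]; [reflexivity|]; cbn [count_upto count_lt]; lia. Qed.

Lemma has_density_periodic P p : (0 < p)%nat -> periodic P p ->
  has_density P (INR (count_lt P p) / INR p).
Proof.
  intros Hp HP.
  set (Q j := P (S j)).
  assert (HQ : periodic Q p) by (intros x; apply (HP (S x))).
  unfold has_density; rewrite <- (count_lt_shift P p HP).
  apply (Un_cv_of_le_div _ _ (INR p)); intros m Hm.
  rewrite count_upto_count_lt; fold Q.
  destruct (count_lt_periodic_approx Q p m Hp HQ) as [Hup Hlow].
  apply le_INR in Hup, Hlow; rewrite !plus_INR, !mult_INR in Hup, Hlow.
  assert (0 < INR p) by (apply lt_0_INR; lia).
  assert (0 < INR m) by (apply lt_0_INR; lia).
  apply Rabs_le; split; apply (Rmult_le_reg_r (INR m * INR p)); try nra;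
    field_simplify; lra.
Qed.

Lemma pow2_pos n : (0 < 2 ^ n)%nat.
Proof. apply Nat.neq_0_lt_0, Nat.pow_nonzero; lia. Qed.

Lemma collatz_iter_S n w : collatz_iter (S n) w = collatz_iter n (collatz w).
Proof. induction n as [|n IH]; simpl in *; [reflexivity | now rewrite <- IH]. Qed.

Lemma collatz_double x : collatz (2 * x) = x.
Proof. unfold collatz; now rewrite Nat.even_even, Nat.div2_double. Qed.

Lemma collatz_double_S x : collatz (2 * x + 1) = (2 * (3 * x + 2))%nat.
Proof. unfold collatz; rewrite Nat.even_odd; lia. Qed.

Lemma collatz_add_mul_pow2 K x t :
  exists u, collatz (x + t * 2 ^ S K) = (collatz x + u * 2 ^ K)%nat.
Proof.
  change (2 ^ S K)%nat with (2 * 2 ^ K)%nat.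
  destruct (Nat.Even_or_Odd x) as [[y ->] | [y ->]].
  - exists t.
    replace (2 * y + t * (2 * 2 ^ K))%nat with (2 * (y + t * 2 ^ K))%nat by lia.
    now rewrite !collatz_double.
  - exists (6 * t)%nat.
    replace (2 * y + 1 + t * (2 * 2 ^ K))%nat with (2 * (y + t * 2 ^ K) + 1)%nat by lia.
    rewrite !collatz_double_S; lia.
Qed.

Lemma collatz_iter_add_mul_pow2 n : forall K x t,
  exists u, collatz_iter n (x + t * 2 ^ (n + K)) = (collatz_iter n x + u * 2 ^ K)%nat.
Proof.
  induction n as [|n IH]; intros K x t; [now exists t|].
  destruct (collatz_add_mul_pow2 (n + K) x t) as [u Hu].
  destruct (IH K (collatz x) u) as [v Hv].
  exists v; rewrite !collatz_iter_S, <- Hv, <- Hu; reflexivity.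
Qed.

Lemma even_collatz_iter_periodic n :
  periodic (fun k => Nat.even (collatz_iter n k)) (2 ^ S n).
Proof.
  intros x.
  destruct (collatz_iter_add_mul_pow2 n 1 x 1) as [u Hu].
  rewrite Nat.mul_1_l, Nat.add_1_r in Hu; rewrite Hu.
  rewrite Nat.pow_1_r, (Nat.mul_comm u); apply Nat.even_add_mul_2.
Qed.

Definition even_count (n : nat) : nat :=
  count_lt (fun k => Nat.even (collatz_iter n k)) (2 ^ S n).

Lemma even_count_SS n : even_count (S (S n)) = (even_count (S n) + 2 * even_count n)%nat.
Proof.
  unfold even_count; set (P k := Nat.even (collatz_iter n k)).
  change (2 ^ S (S (S n)))%nat with (2 * 2 ^ S (S n))%nat; rewrite count_lt_double.
  f_equal.
  - apply count_lt_ext; intros y; now rewrite collatz_iter_S, collatz_double.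
  - transitivity (count_lt (fun y => P (3 * y + 2)%nat) (2 ^ S (S n))).
    { apply count_lt_ext; intros y; unfold P.
      now rewrite !collatz_iter_S, collatz_double_S, collatz_double. }
    assert (HP : periodic P (2 ^ S n)) by apply even_collatz_iter_periodic.
    rewrite count_lt_odd_progression; change (2 ^ S (S n))%nat with (2 * 2 ^ S n)%nat.
    + now apply count_lt_periodic_mul.
    + now apply periodic_mul.
    + now exists 1%nat.
Qed.

Lemma even_count_closed_form n : 3 * INR (even_count n) = 2 ^ (n + 2) - (-1) ^ n.
Proof.
  enough (H : 3 * INR (even_count n) = 2 ^ (n + 2) - (-1) ^ n /\
              3 * INR (even_count (S n)) = 2 ^ (S n + 2) - (-1) ^ S n) by apply H.
  induction n as [|n [IH IHS]].
  - split; [change (even_count 0) with 1%nat | change (even_count 1) with 3%nat];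
      simpl; lra.
  - split; [exact IHS|].
    rewrite even_count_SS, plus_INR, mult_INR. simpl pow in *; simpl INR; lra.
Qed.

Lemma pow2_INR_S n : INR (2 ^ S n) = 2 * 2 ^ n.
Proof. rewrite pow_INR, INR_IZR_INZ; reflexivity. Qed.

Lemma neg_half_pow n : (- / 2) ^ n = (-1) ^ n / 2 ^ n.
Proof.
  replace (- / 2) with (-1 * / 2) by field.
  now rewrite Rpow_mult_distr, pow_inv.
Qed.

Lemma even_density_value n :
  INR (even_count n) / INR (2 ^ S n) = 2 / 3 + - / 6 * (- / 2) ^ n.
Proof.
  assert (H2n : 0 < 2 ^ n) by (apply pow_lt; lra).
  pose proof (even_count_closed_form n) as Hclosed; rewrite pow_add in Hclosed.
  replace (INR (even_count n)) with ((4 * 2 ^ n - (-1) ^ n) / 3) by (simpl in Hclosed; lra).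
  rewrite pow2_INR_S, neg_half_pow; field; lra.
Qed.

Lemma odd_density_value n :
  INR (count_lt (fun k => Nat.odd (collatz_iter n k)) (2 ^ S n)) / INR (2 ^ S n) =
  1 / 3 + / 6 * (- / 2) ^ n.
Proof.
  rewrite (count_lt_negb (fun k => Nat.even (collatz_iter n k))), minus_INR
    by apply count_lt_le.
  fold (even_count n).
  assert (Hpos : 0 < INR (2 ^ S n)) by (apply lt_0_INR, pow2_pos).
  replace (1 / 3 + / 6 * (- / 2) ^ n) with (1 - (2 / 3 + - / 6 * (- / 2) ^ n)) by field.
  rewrite <- even_density_value; field; lra.
Qed.

Lemma Un_cv_geometric_offset l C r : Rabs r < 1 -> Un_cv (fun n => l + C * r ^ n) l.
Proof.
  intros Hr eps Heps.
  assert (HC : 0 < Rabs C + 1) by (pose proof (Rabs_pos C); lra).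
  destruct (pow_lt_1_zero r Hr (eps / (Rabs C + 1))) as [N HN].
  { apply Rdiv_lt_0_compat; lra. }
  exists N; intros n Hn; unfold R_dist.
  replace (l + C * r ^ n - l) with (C * r ^ n) by ring.
  specialize (HN n Hn); rewrite Rabs_mult.
  assert (Hbound : (Rabs C + 1) * Rabs (r ^ n) < eps).
  { apply (Rmult_lt_compat_l (Rabs C + 1)) in HN; [|lra].
    replace ((Rabs C + 1) * (eps / (Rabs C + 1))) with eps in HN by (field; lra).
    exact HN. }
  pose proof (Rabs_pos (r ^ n)); nra.
Qed.

Theorem corollary3p1 :
  exists nu0 nu1 : nat -> R,
    (forall n : nat,
        has_density (fun k => Nat.even (collatz_iter n k)) (nu0 n) /\
        has_density (fun k => Nat.odd (collatz_iter n k)) (nu1 n)) /\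
    Un_cv nu0 (2 / 3) /\ Un_cv nu1 (1 / 3).
Proof.
  exists (fun n => 2 / 3 + - / 6 * (- / 2) ^ n), (fun n => 1 / 3 + / 6 * (- / 2) ^ n).
  assert (Hratio : Rabs (- / 2) < 1) by (rewrite Rabs_Ropp, Rabs_right; lra).
  split; [intros n; split | split; now apply Un_cv_geometric_offset].
  - rewrite <- even_density_value.
    apply has_density_periodic; [apply pow2_pos|].
    apply even_collatz_iter_periodic.
  - rewrite <- odd_density_value.
    apply has_density_periodic; [apply pow2_pos|].
    intros x; unfold Nat.odd; now rewrite (even_collatz_iter_periodic n x).
Qed.
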